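(* Let $R$ be a ring with identity and $(S,\leq)$ a strictly ordered monoid which is quasitotally ordered, and suppose $R$ is $S$-Armendariz. Let $A=R[[S]]$ be the ring of generalized power series. Then $A$ is a generalized right Baer ring if and only if $R$ is a generalized right Baer ring; and $A$ is a generalized right quasi-Baer ring if and only if $R$ is a generalized right quasi-Baer ring.
   Context: All rings are associative with identity. For a nonempty subset $X$ of a ring $R$, $r_R(X)=\{a\in R : xa=0 \text{ for all } x\in X\}$, and for a positive integer $n$, $X^n$ denotes the set of all products $a_1\cdots a_n$ with $a_i\in X$. A ring $R$ is generalized right Baer if for every nonempty subset $X$ of $R$ there exist a positive integer $n$ and an idempotent $e\in R$ with $r_R(X^n)=eR$; it is generalized right quasi-Baer if for every right ideal $I$ of $R$ there exist a positive integer $n$ and an idempotent $e\in R$ with $r_R(I^n)=eR$. An ordered monoid $(S,\leq)$ is a monoid with a partial order such that $u\le v$ implies $ut\le vt$ and $tu\le tv$; it is strictly ordered if $u<v$ implies $ut<vt$ and $tu<tv$ for all $t\in S$; it is quasitotally ordered if $\leq$ can be refined to an order $\preceq$ making $S$ a strictly totally ordered monoid. A subset of $S$ is artinian if every strictly decreasing sequence in it is finite, and narrow if every set of pairwise incomparable elements in it is finite. The ring of generalized power series $R[[S]]$ is the set of maps $f:S\to R$ with artinian and narrow support $\{s: f(s)\ne0\}$, with pointwise addition and multiplication $(fg)(s)=\sum_{uv=s} f(u)g(v)$ (the sum is finite over pairs with $f(u)\neq0\neq g(v)$). $R$ is $S$-Armendariz if whenever $f,g\in R[[S]]$ satisfy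 $fg=0$, then $f(u)g(v)=0$ for all $u,v\in S$. *)

From HB Require Import structures.
From mathcomp Require Import all_boot all_order all_algebra.
From mathcomp Require Import boolp classical_sets functions cardinality fsbigop.
Set Implicit Arguments. Unset Strict Implicit. Unset Printing Implicit Defensive.
Import Order.TTheory GRing.Theory.
Local Open Scope classical_set_scope.
Local Open Scope ring_scope.

Definition is_monoid {S : Type} (mul : S -> S -> S) (one : S) : Prop :=
  [/\ forall x y z, mul x (mul y z) = mul (mul x y) z,
      forall x, mul one x = x & forall x, mul x one = x].

Definition is_partial_order {S : Type} (le : S -> S -> Prop) : Prop :=
  [/\ forall x, le x x,
      forall x y, le x y -> le y x -> x = y &
      forall x y z, le x y -> le y z -> le x z].

Definition strict_of {S : Type} (le : S -> S -> Prop) (x y : S) : Prop :=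
  le x y /\ x <> y.

Definition ordered_monoid {S : Type} (mul : S -> S -> S) (one : S)
  (le : S -> S -> Prop) : Prop :=
  [/\ is_monoid mul one, is_partial_order le &
      forall u v t, le u v -> le (mul u t) (mul v t) /\ le (mul t u) (mul t v)].

Definition strictly_ordered_monoid {S : Type} (mul : S -> S -> S) (one : S)
  (le : S -> S -> Prop) : Prop :=
  ordered_monoid mul one le /\
  forall u v t, strict_of le u v ->
    strict_of le (mul u t) (mul v t) /\ strict_of le (mul t u) (mul t v).

Definition quasitotally_ordered {S : Type} (mul : S -> S -> S) (one : S)
  (le : S -> S -> Prop) : Prop :=
  exists le' : S -> S -> Prop,
    (forall x y, le x y -> le' x y) /\
    strictly_ordered_monoid mul one le' /\
    (forall x y, le' x y \/ le' y x).

Definition artinian_set {S : Type} (le : S -> S -> Prop) (X : set S) : Prop :=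
  ~ exists a : nat -> S, forall n, X (a n) /\ strict_of le (a n.+1) (a n).

Definition narrow_set {S : Type} (le : S -> S -> Prop) (X : set S) : Prop :=
  forall Y : set S, Y `<=` X ->
    (forall x y, Y x -> Y y -> x <> y -> ~ le x y /\ ~ le y x) ->
    finite_set Y.

Definition supp {S : Type} {R : pzRingType} (f : S -> R) : set S :=
  [set s | f s != 0].

(* carrier of R[[S]] *)
Definition gps {S : Type} (le : S -> S -> Prop) {R : pzRingType} : set (S -> R) :=
  [set f | artinian_set le (supp f) /\ narrow_set le (supp f)].

Definition gps_add {S : Type} {R : pzRingType} (f g : S -> R) : S -> R :=
  fun s => f s + g s.
Definition gps_opp {S : Type} {R : pzRingType} (f : S -> R) : S -> R :=
  fun s => - f s.
Definition gps_zero {S : Type} {R : pzRingType} : S -> R := fun _ => 0.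

(* (fg)(s) = sum_{uv = s} f(u) g(v); the sum has finitely many nonzero terms
   for f, g in R[[S]], and \sum_(p \in A) is the sum over the (finite) support *)
Definition gps_mul {S : choiceType} (mul : S -> S -> S) {R : pzRingType}
  (f g : S -> R) : S -> R :=
  fun s => \sum_(p \in [set p : S * S | mul p.1 p.2 = s]) (f p.1 * g p.2).

(* ---------- Generalized (quasi-)Baer, for a ring given by its carrier
   P : set T and operations (used both for R and for R[[S]]) ---------- *)
Section GenRing.
Variables (T : Type) (P : set T) (add mul : T -> T -> T) (opp : T -> T) (zero : T).

Definition r_ann (X : set T) : set T :=
  [set a | P a /\ forall x, X x -> mul x a = zero].

Fixpoint set_pow (X : set T) (n : nat) : set T :=
  match n with
  | 0 => X (* unused: only n >= 1 is considered *)
  | 1 => X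
  | m.+1 => [set y | exists x z, X x /\ set_pow X m z /\ y = mul x z]
  end.

Definition idempotent_in (e : T) : Prop := P e /\ mul e e = e.

Definition principal_right (e : T) : set T := [set y | exists a, P a /\ y = mul e a].

Definition right_ideal (I : set T) : Prop :=
  [/\ I `<=` P, I zero,
      forall x y, I x -> I y -> I (add x y),
      forall x, I x -> I (opp x) &
      forall x a, I x -> P a -> I (mul x a)].

Definition gen_right_Baer_on : Prop :=
  forall X : set T, X `<=` P -> X !=set0 ->
    exists n : nat, exists e : T,
      (0 < n)%N /\ idempotent_in e /\ r_ann (set_pow X n) = principal_right e.

Definition gen_right_quasi_Baer_on : Prop :=
  forall I : set T, right_ideal I ->
    exists n : nat, exists e : T,
      (0 < n)%N /\ idempotent_in e /\ r_ann (set_pow I n) = principal_right e.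
End GenRing.

Definition gen_right_Baer (R : pzRingType) : Prop :=
  gen_right_Baer_on [set: R] *%R 0.
Definition gen_right_quasi_Baer (R : pzRingType) : Prop :=
  gen_right_quasi_Baer_on [set: R] +%R *%R (fun x => - x) 0.

Definition gps_gen_right_Baer {S : choiceType} (mul : S -> S -> S)
  (le : S -> S -> Prop) (R : pzRingType) : Prop :=
  gen_right_Baer_on (@gps S le R) (@gps_mul S mul R) gps_zero.
Definition gps_gen_right_quasi_Baer {S : choiceType} (mul : S -> S -> S)
  (le : S -> S -> Prop) (R : pzRingType) : Prop :=
  gen_right_quasi_Baer_on (@gps S le R) gps_add (@gps_mul S mul R) gps_opp gps_zero.

Definition S_Armendariz {S : choiceType} (mul : S -> S -> S)
  (le : S -> S -> Prop) (R : pzRingType) : Prop :=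
  forall f g : S -> R, gps le f -> gps le g -> gps_mul mul f g = gps_zero ->
    forall u v, f u * g v = 0.

From mathcomp Require Import all_boot all_order all_algebra.
From mathcomp Require Import boolp classical_sets functions cardinality fsbigop.

(* R sits in A = R[[S]] as the constant series.  The S-Armendariz property
   makes right annihilators in A of powers X^n coefficientwise: a series g kills
   X^n iff each coefficient of g kills all n-fold products of coefficients of
   series in X.  It also forces every idempotent of A to be a constant e, and
   eA is then the set of series whose coefficients all lie in eR.  Hence an
   idempotent generating an annihilator on one side yields one on the other:
   for right ideals one passes from I in R to the series with coefficients in
   I, and from J in A to the right ideal of R generated by its coefficients.
   The ring laws of A rest on artinian narrow subsets of S being
   partially well-ordered, which makes the convolution sums finite. *)

Set Implicit Arguments. Unset Strict Implicit. Unset Printing Implicit Defensive.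
Import GRing.Theory.
Local Open Scope classical_set_scope.

Lemma infinite_set_injseq (T : Type) (A : set T) : infinite_set A ->
  exists2 e : nat -> T, (forall n, A (e n)) & injective e.
Proof.
move=> /infiniteP/card_leP[f]; exists (fun n => \val (f (to_setT n))).
  by move=> n; apply: set_valP.
by move=> m n /val_inj /(@inj _ _ _ f) -/(_ (in_setT _) (in_setT _)) /(congr1 \val).
Qed.

Lemma finite_nat_ubound (A : set nat) : finite_set A ->
  exists N, forall i, A i -> (i < N)%N.
Proof.
move=> /finite_seqP[s ->]; exists (\max_(i <- s) i).+1 => i /= si.
by rewrite ltnS (leq_bigmax_seq (F := id) _ si).
Qed.

Lemma cofinal_subseq (P : nat -> Prop) :
  (forall N, exists i, (N <= i)%N /\ P i) ->
  exists2 phi : nat -> nat, {homo phi : m n / (m < n)%N} & forall k, P (phi k).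
Proof.
move=> /choice[f Hf].
pose phi := fix phi k := if k is k'.+1 then f (phi k').+1 else f 0%N.
exists phi; last by case=> [|k]; [case: (Hf 0%N)|case: (Hf (phi k).+1)].
by apply: homo_ltn => [y x z|k]; [exact: ltn_trans|case: (Hf (phi k).+1)].
Qed.

Section PartialOrder.
Variables (T : Type) (le : T -> T -> Prop).
Hypothesis le_po : is_partial_order le.

Let le_refl x : le x x. Proof. by case: le_po. Qed.
Let le_anti x y : le x y -> le y x -> x = y. Proof. by case: le_po => _ + _; apply. Qed.
Let le_trans y x z : le x y -> le y z -> le x z.
Proof. by case: le_po => _ _; apply. Qed.

Let lt_trans y x z : strict_of le x y -> strict_of le y z -> strict_of le x z.
Proof.
move=> [xy nxy] [yz nyz]; split; first exact: le_trans xy yz.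
by move=> exz; apply: nyz; apply: le_anti yz _; rewrite -exz.
Qed.

(* Partially well-ordered sets; for a partial order these are exactly the
   artinian narrow sets, and this form propagates through unions and products. *)
Definition pwo_set (X : set T) := forall a : nat -> T, (forall n, X (a n)) ->
  exists2 phi : nat -> nat, {homo phi : m n / (m < n)%N} &
    {homo a \o phi : m n / (m <= n)%N >-> le m n}.

Definition minimal_in (V : set T) (m : T) :=
  V m /\ forall w, V w -> le w m -> w = m.

Lemma artinian_minimal_below V v : artinian_set le V -> V v ->
  exists m, minimal_in V m /\ le m v.
Proof.
move=> artV Vv; apply: contrapT => nomin; apply: artV.
have step w : exists w', V w /\ le w v -> V w' /\ strict_of le w' w.
  have [[Vw wv]|] := pselect (V w /\ le w v); last by exists w.
  have /not_andP[//|/existsNP[w' /not_implyP[Vw' /not_implyP[w'w ne]]]] :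
      ~ minimal_in V w by move=> mw; apply: nomin; exists w.
  by exists w'.
have [f Hf] := choice step.
have below n : V (iter n f v) /\ le (iter n f v) v.
  elim: n => [|n [Vn nv]] //=; have [Vf [fn _]] := Hf _ (conj Vn nv).
  by split => //; apply: le_trans fn nv.
by exists (fun n => iter n f v) => n; split; [case: (below n)|case: (Hf _ (below n))].
Qed.

Lemma narrow_minimal V : narrow_set le V -> finite_set (minimal_in V).
Proof.
move=> narV; apply: narV => [m []//|x y [Vx mx] [Vy my] nxy].
by split=> [/(my _ Vx)|/(mx _ Vy)/esym].
Qed.

(* Only finitely many values of [b] are minimal in its range, and each of them
   occurs at some index; any later term lies above one of them. *)
Lemma artinian_narrow_le_pair X b : artinian_set le X -> narrow_set le X ->
  (forall n, X (b n)) -> exists i j, (i < j)%N /\ le (b i) (b j).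
Proof.
move=> artX narX Xb; have rangeX : range b `<=` X by move=> _ [n _ <-].
have artV : artinian_set le (range b).
  by move=> [a Ha]; apply: artX; exists a => n; have [/rangeX] := Ha n.
have narV : narrow_set le (range b).
  by move=> Y YV; apply: narX; apply: subset_trans YV rangeX.
have idx m : exists n, minimal_in (range b) m -> b n = m.
  by have [[[n _ <-] _]|] := pselect (minimal_in (range b) m); [exists n|exists 0%N].
have [g Hg] := choice idx.
have [N HN] := finite_nat_ubound (finite_image g (narrow_minimal narV)).
have [m [mm mbN]] := artinian_minimal_below artV (imageT b N).
by exists (g m), N; split; [apply: HN; exists m|rewrite Hg].
Qed.

Lemma artinian_narrow_pwo X : artinian_set le X -> narrow_set le X -> pwo_set X.
Proof.
move=> artX narX a Xa.
pose terminal i := forall j, (i < j)%N -> ~ le (a i) (a j).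
have [cof|/existsNP[N HN]] := pselect (forall N, exists i, (N <= i)%N /\ terminal i).
  have [psi psi_inc Tpsi] := cofinal_subseq cof.
  have [k [l [kl le_kl]]] := artinian_narrow_le_pair artX narX (fun k => Xa (psi k)).
  by case: (Tpsi k (psi l) (psi_inc _ _ kl)).
have next i : exists j, (N <= i)%N -> (i < j)%N /\ le (a i) (a j).
  have [Ni|] := boolP (N <= i)%N; last by exists i.
  have /existsNP[j /not_implyP[ij /contrapT ?]] : ~ terminal i.
    by move=> Ti; apply: HN; exists i.
  by exists j.
have [f Hf] := choice next.
have Nf k : (N <= iter k f N)%N.
  by elim: k => //= k IH; apply: leq_trans IH (ltnW (Hf _ IH).1).
exists (fun k => iter k f N).
  by apply: homo_ltn => [y x z|k]; [exact: ltn_trans|case: (Hf _ (Nf k))].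
by apply: homo_leq => [//|y x z|k]; [exact: le_trans|case: (Hf _ (Nf k))].
Qed.

Lemma pwo_artinian X : pwo_set X -> artinian_set le X.
Proof.
move=> pwoX [a Ha]; have [phi phi_inc phi_le] := pwoX a (fun n => (Ha n).1).
have a_dec : {homo a : m n / (m < n)%N >-> strict_of le n m}.
  by apply: homo_ltn => [y x z xy yz|n]; [exact: lt_trans yz xy|exact: (Ha n).2].
have [le10 ne] := a_dec _ _ (phi_inc 0%N 1%N isT).
by apply: ne; apply: le_anti le10 (phi_le 0%N 1%N isT).
Qed.

Lemma pwo_narrow X : pwo_set X -> narrow_set le X.
Proof.
move=> pwoX Y YX antiY; apply: contrapT => /infinite_set_injseq[e Ye e_inj].
have [phi phi_inc phi_le] := pwoX e (fun n => YX _ (Ye n)).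
have ne : e (phi 0%N) <> e (phi 1%N).
  by move=> /e_inj e01; move: (phi_inc 0%N 1%N isT); rewrite e01 ltnn.
by case: (antiY _ _ (Ye _) (Ye _) ne) => + _; apply; apply: phi_le.
Qed.

Lemma pwo_subset X Y : X `<=` Y -> pwo_set Y -> pwo_set X.
Proof. by move=> XY pwoY a Xa; apply: pwoY => n; apply: XY. Qed.

Lemma pwo_set1 x : pwo_set [set x].
Proof. by move=> a Ha; exists id => // m n _ /=; rewrite (Ha m) (Ha n). Qed.

Lemma pwo_setU X Y : pwo_set X -> pwo_set Y -> pwo_set (X `|` Y).
Proof.
move=> pwoX pwoY a XYa.
have [cof|/existsNP[N HN]] := pselect (forall N, exists i, (N <= i)%N /\ X (a i)).
  have [psi psi_inc Xpsi] := cofinal_subseq cof.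
  have [phi phi_inc phi_le] := pwoX _ Xpsi.
  by exists (psi \o phi) => [m n mn|]; [apply/psi_inc/phi_inc|exact: phi_le].
have Ya n : Y (a (n + N)%N).
  have [Xa|//] := XYa (n + N)%N.
  by case: HN; exists (n + N)%N; rewrite leq_addl.
have [phi phi_inc phi_le] := pwoY _ Ya.
by exists (fun n => phi n + N)%N => [m n mn|]; [rewrite ltn_add2r phi_inc|exact: phi_le].
Qed.

End PartialOrder.

Section OrderedMonoid.
Variables (S : Type) (mul : S -> S -> S) (one : S) (le : S -> S -> Prop).

Definition set_mul (X Y : set S) := [set mul x y | x in X & y in Y].

Definition factorizations (X Y : set S) (s : S) : set (S * S) :=
  [set p | X p.1 /\ Y p.2 /\ mul p.1 p.2 = s].

Lemma ordered_monoid_le_mul x x' y y' : ordered_monoid mul one le ->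
  le x x' -> le y y' -> le (mul x y) (mul x' y').
Proof.
move=> [_ [_ _ le_trans] mono] xx' yy'.
exact: le_trans (mono _ _ y xx').1 (mono _ _ x' yy').2.
Qed.

Lemma strictly_ordered_mul_le_eq x x' y y' : strictly_ordered_monoid mul one le ->
  le x x' -> le y y' -> mul x y = mul x' y' -> x = x' /\ y = y'.
Proof.
move=> [[_ [_ le_anti _] mono] strict] xx' yy' exy.
have [exx'|nxx'] := pselect (x = x').
  split=> //; apply: contrapT => nyy'; rewrite -exx' in exy.
  by have [_ []] := strict _ _ x (conj yy' nyy').
have [le_y ne_y] := (strict _ _ y (conj xx' nxx')).1.
by case: ne_y; apply: le_anti le_y _; rewrite exy; apply: (mono _ _ x' yy').2.
Qed.

Lemma pwo_set_mul X Y : ordered_monoid mul one le ->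
  pwo_set le X -> pwo_set le Y -> pwo_set le (set_mul X Y).
Proof.
move=> HS pwoX pwoY c Xc.
have /choice[p Hp] n : exists p : S * S, X p.1 /\ Y p.2 /\ mul p.1 p.2 = c n.
  by have [x Xx [y Yy <-]] := Xc n; exists (x, y).
have [phi phi_inc phi_le] := pwoX (fun n => (p n).1) (fun n => (Hp n).1).
have [psi psi_inc psi_le] := pwoY (fun n => (p (phi n)).2) (fun n => (Hp _).2.1).
exists (phi \o psi) => [m n /psi_inc/phi_inc //|m n mn /=].
case: (Hp (phi (psi m))) (Hp (phi (psi n))) => _ [_ <-] [_ [_ <-]].
by apply: ordered_monoid_le_mul HS (phi_le _ _ (ltnW_homo psi_inc mn)) (psi_le _ _ mn).
Qed.

Lemma pwo_finite_factorizations X Y s : strictly_ordered_monoid mul one le ->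
  pwo_set le X -> pwo_set le Y -> finite_set (factorizations X Y s).
Proof.
move=> HS pwoX pwoY; apply: contrapT => /infinite_set_injseq[e He e_inj].
have [phi phi_inc phi_le] := pwoX (fun n => (e n).1) (fun n => (He n).1).
have [psi psi_inc psi_le] := pwoY (fun n => (e (phi n)).2) (fun n => (He _).2.1).
have psi01 : (psi 0 < psi 1)%N by apply: psi_inc.
have [e1 e2] := strictly_ordered_mul_le_eq HS (phi_le _ _ (ltnW psi01))
  (psi_le 0%N 1%N isT) (etrans (He _).2.2 (esym (He _).2.2)).
have /e_inj e01 := injective_projections (e (phi (psi 0%N))) _ e1 e2.
by move: (phi_inc _ _ psi01); rewrite e01 ltnn.
Qed.

End OrderedMonoid.

Local Open Scope ring_scope.

Lemma mulr_fsuml_finite (R : pzRingType) (I : choiceType) (D : set I)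
  (F : I -> R) c : finite_set D -> (\sum_(i \in D) F i) * c = \sum_(i \in D) F i * c.
Proof. by move=> finD; rewrite !fsbig_finite // mulr_suml. Qed.

Lemma pair_fsbig_dep (R : pzRingType) (I J : choiceType) (A : set I)
  (B : I -> set J) (F : I -> J -> R) :
  finite_set A -> (forall i, A i -> finite_set (B i)) ->
  \sum_(i \in A) \sum_(j \in B i) F i j = \sum_(k \in A `*`` B) F k.1 k.2.
Proof.
move=> finA finB; pose U := snd @` (A `*`` B).
have finU : finite_set U by apply/finite_image/finite_setXR.
pose G i j := if j \in B i then F i j else 0.
transitivity (\sum_(i \in A) \sum_(j \in U) G i j).
  apply: eq_fsbigr => i /set_mem Ai.
  rewrite (eq_fsbigr (G i)) => [|j /set_mem Bj]; last by rewrite /G (mem_set Bj).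
  apply: fsbig_widen => [j Bj|j [_ nBj]]; first by exists (i, j).
  by rewrite /G /= memNset.
rewrite pair_fsbig // -(fsbig_widen (A `*`` B) (A `*` U) (fun k => G k.1 k.2)).
- by apply: eq_fsbigr => -[i j] /set_mem [/= _ Bj]; rewrite /G (mem_set Bj).
- by move=> [i j] [/= Ai Bj]; split=> //; exists (i, j).
- move=> [i j] [[/= Ai _] nAB]; have nBj : ~ B i j by move=> Bj; apply: nAB.
  by rewrite /G /= (memNset nBj).
Qed.

Lemma set_powS (T : Type) (op : T -> T -> T) (X : set T) n :
  set_pow op X n.+2 = [set y | exists x z, X x /\ set_pow op X n.+1 z /\ y = op x z].
Proof. by []. Qed.

Lemma set_pow_mono (T : Type) (op : T -> T -> T) (X Y : set T) n :
  X `<=` Y -> set_pow op X n `<=` set_pow op Y n.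
Proof.
move=> XY; elim: n => [|[|n] IH] //; rewrite !set_powS => _ [x [z [Xx [Pz ->]]]].
by exists x, z; split; [apply: XY|split; [apply: IH|]].
Qed.

Lemma set_pow_image (T U : Type) (opT : T -> T -> T) (opU : U -> U -> U)
  (phi : T -> U) (X : set T) n : {morph phi : x y / opT x y >-> opU x y} ->
  set_pow opU (phi @` X) n = phi @` set_pow opT X n.
Proof.
move=> phiM; elim: n => [|[|n] IH] //; rewrite !set_powS; apply/seteqP; split.
- move=> _ [_ [z [[x Xx <-] [+ ->]]]]; rewrite IH => -[z' Pz' <-].
  by exists (opT x z'); [exists x, z'|rewrite phiM].
- move=> _ [_ [x [z [Xx [Pz ->]]] <-]]; exists (phi x), (phi z).
  by split; [exists x|split; [rewrite IH; exists z|rewrite phiM]].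
Qed.

Section RightIdeals.
Variable R : pzRingType.
Implicit Types (C I : set R).

Local Notation right_idealR := (right_ideal [set: R] +%R *%R (fun x => - x) 0).
Local Notation annR Y := (r_ann [set: R] *%R 0 Y).

Lemma right_ideal_fsum (J : choiceType) I (P : set J) (F : J -> R) :
  right_idealR I -> (forall j, P j -> I (F j)) -> I (\sum_(j \in P) F j).
Proof.
move=> [_ I0 ID _ _] PI; case: finite_supportP; first by rewrite big_nil.
by move=> X XP _ _; rewrite big_seq; apply: big_ind => // j /XP /PI.
Qed.

Definition finite_sums C := [set x | exists s : seq R,
  (forall c, c \in s -> C c) /\ x = \sum_(c <- s) c].

Lemma right_ideal_finite_sums C : (forall c, C c -> C (- c)) ->
  (forall c a, C c -> C (c * a)) -> right_idealR (finite_sums C).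
Proof.
move=> CN CM; split=> //; first by exists [::]; rewrite big_nil.
- move=> _ _ [s [sC ->]] [t [tC ->]]; exists (s ++ t); rewrite big_cat.
  by split=> // c; rewrite mem_cat => /orP[/sC|/tC].
- move=> _ [s [sC ->]]; exists (map -%R s); rewrite big_map sumrN.
  by split=> // _ /mapP[c /sC Cc ->]; apply: CN.
- move=> _ a [s [sC ->]] _; exists (map ( *%R^~ a) s); rewrite big_map mulr_suml.
  by split=> // _ /mapP[c /sC Cc ->]; apply: CM.
Qed.

Lemma finite_sums_pow_annihilate C n x u y : set_pow *%R (finite_sums C) n.+1 x ->
  (forall z, set_pow *%R C n.+1 z -> u * z * y = 0) -> u * x * y = 0.
Proof.
elim: n => [|n IH] in x u *.
  move=> [s [sC ->]] Cy; rewrite mulr_sumr mulr_suml big1_seq // => c /andP[_ cs].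
  exact/Cy/sC.
move=> [_ [x' [[s [sC ->]] [Px' ->]]]] Cy.
rewrite mulr_suml mulr_sumr mulr_suml big1_seq // => c /andP[_ cs].
rewrite mulrA; apply: IH Px' _ => z Pz; rewrite -(mulrA u); apply: Cy.
by exists c, z; split=> //; apply: sC.
Qed.

Lemma r_ann_pow_finite_sums C n :
  annR (set_pow *%R (finite_sums C) n.+1) = annR (set_pow *%R C n.+1).
Proof.
have sumsC : C `<=` finite_sums C.
  by move=> c Cc; exists [:: c]; rewrite big_seq1; split=> // c'; rewrite inE => /eqP->.
apply/seteqP; split=> y [_ Ay]; split=> // x Px.
  by apply: Ay; apply: set_pow_mono Px.
rewrite -[x]mul1r; apply: finite_sums_pow_annihilate Px _ => z Pz.
by rewrite mul1r; apply: Ay.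
Qed.

End RightIdeals.

Section GeneralizedPowerSeries.
Variables (R : pzRingType) (S : choiceType) (mul : S -> S -> S) (one : S).
Variable (le : S -> S -> Prop).
Hypothesis HS : strictly_ordered_monoid mul one le.

Local Notation gps := (@gps S le R).
Local Notation gmul := (@gps_mul S mul R).
Implicit Types (f g h : S -> R).

Let le_po : is_partial_order le. Proof. by case: HS => -[]. Qed.
Let mulSA x y z : mul x (mul y z) = mul (mul x y) z. Proof. by case: HS => -[[]]. Qed.
Let mul1S x : mul one x = x. Proof. by case: HS => -[[]]. Qed.
Let mulS1 x : mul x one = x. Proof. by case: HS => -[[]]. Qed.

Lemma gps_pwo f : gps f <-> pwo_set le (supp f).
Proof.
split=> [[art nar]|pwo]; first exact: artinian_narrow_pwo.
by split; [apply: pwo_artinian|apply: pwo_narrow].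
Qed.

Lemma mul_neq0_supp f g u v : f u * g v != 0 -> supp f u /\ supp g v.
Proof. by move=> fg; split; apply/eqP => f0; move: fg; rewrite f0 ?mul0r ?mulr0 eqxx. Qed.

Lemma gps_mulE X Y f g s : supp f `<=` X -> supp g `<=` Y ->
  gmul f g s = \sum_(p \in factorizations mul X Y s) f p.1 * g p.2.
Proof.
move=> fX gY; apply/esym/fsbig_widen => [p [_ []]//|[u v] [/= uvs nXY]].
apply/eqP; apply: contraT => /mul_neq0_supp[fu gv].
by exfalso; apply: nXY; split; [apply: fX|split; [apply: gY|]].
Qed.

Lemma gps_mul_suppE f g s :
  gmul f g s = \sum_(p \in factorizations mul (supp f) (supp g) s) f p.1 * g p.2.
Proof. exact: gps_mulE. Qed.

Lemma supp_gps_mul f g : supp (gmul f g) `<=` set_mul mul (supp f) (supp g).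
Proof.
move=> s /eqP; apply: contra_notP => nfg; apply: fsbig1 => -[u v] /= uvs.
apply/eqP; apply: contraT => /mul_neq0_supp[fu gv].
by exfalso; apply: nfg; exists u => //; exists v.
Qed.

Lemma supp_gps_add f g : supp (gps_add f g) `<=` supp f `|` supp g.
Proof.
move=> s; rewrite /supp /gps_add /=; have [f0|] := eqVneq (f s) 0; last by left.
by rewrite f0 add0r; right.
Qed.

Lemma supp_gps_opp f : supp (gps_opp f) = supp f.
Proof. by apply/seteqP; split=> s; rewrite /supp /gps_opp /= oppr_eq0. Qed.

Lemma gps_mul_closed f g : gps f -> gps g -> gps (gmul f g).
Proof.
move=> /gps_pwo pwof /gps_pwo pwog; apply/gps_pwo.
exact: pwo_subset (@supp_gps_mul f g) (pwo_set_mul HS.1 pwof pwog).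
Qed.

Lemma gps_add_closed f g : gps f -> gps g -> gps (gps_add f g).
Proof.
move=> /gps_pwo pwof /gps_pwo pwog; apply/gps_pwo.
exact: pwo_subset (@supp_gps_add f g) (pwo_setU pwof pwog).
Qed.

Lemma gps_opp_closed f : gps f -> gps (gps_opp f).
Proof. by rewrite /gps /= supp_gps_opp. Qed.

Lemma gps_zero_closed : gps gps_zero.
Proof.
apply/gps_pwo; apply: pwo_subset (pwo_set1 le_po (x := one)) => s.
by rewrite /supp /gps_zero /= eqxx.
Qed.

Definition gps_const (c : R) : S -> R := fun s => if s == one then c else 0.

Lemma supp_gps_const c : supp (gps_const c) `<=` [set one].
Proof.
by move=> s; rewrite /supp /gps_const /=; case: (eqVneq s one) => // _; rewrite eqxx.
Qed.

Lemma gps_const_closed c : gps (gps_const c).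
Proof.
by apply/gps_pwo; apply: pwo_subset (pwo_set1 le_po (x := one)); apply: supp_gps_const.
Qed.

Lemma gps_mul_constl c g : gmul (gps_const c) g = fun s => c * g s.
Proof.
apply: funext => s; rewrite (gps_mulE _ (@supp_gps_const c) (@subsetT _ (supp g))).
have -> : factorizations mul [set one] setT s = [set (one, s)].
  apply/seteqP; split=> [[u v] [/= -> [_ <-]]|_ ->]; first by rewrite mul1S.
  by split=> //; split=> //=; rewrite mul1S.
by rewrite fsbig_set1 /gps_const eqxx.
Qed.

Lemma gps_mul_constr f c : gmul f (gps_const c) = fun s => f s * c.
Proof.
apply: funext => s; rewrite (gps_mulE _ (@subsetT _ (supp f)) (@supp_gps_const c)).
have -> : factorizations mul setT [set one] s = [set (s, one)].
  apply/seteqP; split=> [[u v] [/= _ [-> <-]]|_ ->]; first by rewrite mulS1.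
  by split=> //; split=> //=; rewrite mulS1.
by rewrite fsbig_set1 /gps_const eqxx.
Qed.

Lemma gps_const_mul a b : gmul (gps_const a) (gps_const b) = gps_const (a * b).
Proof.
rewrite gps_mul_constl; apply: funext => s.
by rewrite /gps_const; case: eqP; rewrite ?mulr0.
Qed.

Lemma gps_mulDr f g h : gps f -> gps g -> gps h ->
  gmul f (gps_add g h) = gps_add (gmul f g) (gmul f h).
Proof.
move=> /gps_pwo pwof /gps_pwo pwog /gps_pwo pwoh; apply: funext => s.
have finF := pwo_finite_factorizations s HS pwof (pwo_setU pwog pwoh).
rewrite /gps_add (gps_mulE _ (@subset_refl _ (supp f)) (@supp_gps_add g h)).
rewrite (gps_mulE _ (@subset_refl _ (supp f)) (@subsetUl _ (supp g) (supp h))).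
rewrite (gps_mulE _ (@subset_refl _ (supp f)) (@subsetUr _ (supp g) (supp h))).
by rewrite -fsbig_split //; apply: eq_fsbigr => p _; rewrite mulrDr.
Qed.

Lemma gps_mulDl f g h : gps f -> gps g -> gps h ->
  gmul (gps_add f g) h = gps_add (gmul f h) (gmul g h).
Proof.
move=> /gps_pwo pwof /gps_pwo pwog /gps_pwo pwoh; apply: funext => s.
have finF := pwo_finite_factorizations s HS (pwo_setU pwof pwog) pwoh.
rewrite /gps_add (gps_mulE _ (@supp_gps_add f g) (@subset_refl _ (supp h))).
rewrite (gps_mulE _ (@subsetUl _ (supp f) (supp g)) (@subset_refl _ (supp h))).
rewrite (gps_mulE _ (@subsetUr _ (supp f) (supp g)) (@subset_refl _ (supp h))).
by rewrite -fsbig_split //; apply: eq_fsbigr => p _; rewrite mulrDl.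
Qed.

Lemma gps_mulNr f g : gps f -> gps g -> gmul f (gps_opp g) = gps_opp (gmul f g).
Proof.
move=> /gps_pwo pwof /gps_pwo pwog; apply: funext => s.
have finF := pwo_finite_factorizations s HS pwof pwog.
rewrite [RHS]/gps_opp !gps_mul_suppE supp_gps_opp !fsbig_finite // -sumrN.
by apply: eq_bigr => p _; rewrite /gps_opp mulrN.
Qed.

Lemma gps_mulNl f g : gps f -> gps g -> gmul (gps_opp f) g = gps_opp (gmul f g).
Proof.
move=> /gps_pwo pwof /gps_pwo pwog; apply: funext => s.
have finF := pwo_finite_factorizations s HS pwof pwog.
rewrite [RHS]/gps_opp !gps_mul_suppE supp_gps_opp !fsbig_finite // -sumrN.
by apply: eq_bigr => p _; rewrite /gps_opp mulNr.
Qed.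

Definition triple_factorizations (X Y Z : set S) (s : S) : set (S * (S * S)) :=
  [set t | X t.1 /\ Y t.2.1 /\ Z t.2.2 /\ mul t.1 (mul t.2.1 t.2.2) = s].

Lemma gps_mulmulE_l f g h s : gps f -> gps g -> gps h ->
  gmul (gmul f g) h s = \sum_(t \in triple_factorizations (supp f) (supp g) (supp h) s)
    f t.1 * g t.2.1 * h t.2.2.
Proof.
move=> /gps_pwo pwof /gps_pwo pwog /gps_pwo pwoh.
have finFG p := pwo_finite_factorizations p HS pwof pwog.
rewrite (gps_mulE _ (@supp_gps_mul f g) (@subset_refl _ (supp h))).
rewrite (eq_fsbigr (fun p => \sum_(q \in factorizations mul (supp f) (supp g) p.1)
    f q.1 * g q.2 * h p.2)) => [|p _]; last first.
  by rewrite gps_mul_suppE mulr_fsuml_finite.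
rewrite (pair_fsbig_dep (fun p q => f q.1 * g q.2 * h p.2)) //; last first.
  exact: pwo_finite_factorizations HS (pwo_set_mul HS.1 pwof pwog) pwoh.
apply: (reindex_fsbig (fun t => ((mul t.1 t.2.1, t.2.2), (t.1, t.2.1)))); split.
- move=> [u [v r]] [/= fu [gv [hr uvr]]]; split=> //=.
  by split; [exists u => //; exists v|split=> //; rewrite -mulSA].
- by move=> [u [v r]] [u' [v' r']] _ _ [_ -> -> ->].
- move=> [[p r] [u v]] [/= [_ [hr pr]] [fu [gv uvp]]].
  by exists (u, (v, r)); [split=> //=; rewrite mulSA uvp|rewrite /= uvp].
Qed.

Lemma gps_mulmulE_r f g h s : gps f -> gps g -> gps h ->
  gmul f (gmul g h) s = \sum_(t \in triple_factorizations (supp f) (supp g) (supp h) s)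
    f t.1 * (g t.2.1 * h t.2.2).
Proof.
move=> /gps_pwo pwof /gps_pwo pwog /gps_pwo pwoh.
have finGH p := pwo_finite_factorizations p HS pwog pwoh.
rewrite (gps_mulE _ (@subset_refl _ (supp f)) (@supp_gps_mul g h)).
rewrite (eq_fsbigr (fun p => \sum_(q \in factorizations mul (supp g) (supp h) p.2)
    f p.1 * (g q.1 * h q.2))) => [|p _]; last first.
  by rewrite gps_mul_suppE fsbig_distrr.
rewrite (pair_fsbig_dep (fun p q => f p.1 * (g q.1 * h q.2))) //; last first.
  exact: pwo_finite_factorizations HS pwof (pwo_set_mul HS.1 pwog pwoh).
apply: (reindex_fsbig (fun t => ((t.1, mul t.2.1 t.2.2), t.2))); split.
- move=> [u [v r]] [/= fu [gv [hr uvr]]]; split=> //=.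
  by split=> //; split=> //; exists v => //; exists r.
- by move=> [u [v r]] [u' [v' r']] _ _ [-> _ -> ->].
- move=> [[u q] [v r]] [/= [fu [_ uq]] [gv [hr vrq]]].
  by exists (u, (v, r)); [split=> //=; rewrite vrq|rewrite /= vrq].
Qed.

Lemma gps_mulA f g h : gps f -> gps g -> gps h ->
  gmul (gmul f g) h = gmul f (gmul g h).
Proof.
move=> gf gg gh; apply: funext => s.
by rewrite gps_mulmulE_l // gps_mulmulE_r //; apply: eq_fsbigr => t _; rewrite mulrA.
Qed.

Hypothesis S_Arm : S_Armendariz mul le R.

Local Notation annR Y := (r_ann [set: R] *%R 0 Y).
Local Notation annA Z := (r_ann gps gmul gps_zero Z).

(* With [U := 1 - E], both [E U] and [U E] vanish; the Armendariz property then
   kills every product of coefficients of [E] outside the degree [one]. *)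
Lemma gps_idempotent_const E : gps E -> gmul E E = E -> E = gps_const (E one).
Proof.
move=> gE EE; pose U := gps_add (gps_const 1) (gps_opp E).
have g1 := gps_const_closed 1; have gNE := gps_opp_closed gE.
have gU : gps U := gps_add_closed g1 gNE.
have EU : gmul E U = gps_zero.
  rewrite (gps_mulDr gE g1 gNE) (gps_mulNr gE gE) EE gps_mul_constr.
  by apply: funext => s; rewrite /gps_add /gps_opp mulr1 subrr.
have UE : gmul U E = gps_zero.
  rewrite (gps_mulDl g1 gNE gE) (gps_mulNl gE gE) EE gps_mul_constl.
  by apply: funext => s; rewrite /gps_add /gps_opp mul1r subrr.
have E_oneE v : E one * E v = E v.
  move/eqP: (S_Arm gU gE UE one v).
  rewrite /U /gps_add /gps_opp /gps_const eqxx mulrDl mul1r mulNr.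
  by rewrite subr_eq0 eq_sym => /eqP.
have E_orth u v : v != one -> E u * E v = 0.
  move=> vn1; move/eqP: (S_Arm gE gU EU u v).
  by rewrite /U /gps_add /gps_opp /gps_const (negbTE vn1) add0r mulrN oppr_eq0 => /eqP.
apply: funext => s; rewrite /gps_const; case: (eqVneq s one) => [->//|sn1].
by rewrite -E_oneE E_orth.
Qed.

Definition ann_coefwise (Z : set (S -> R)) (Y : set R) :=
  forall g, gps g -> annA Z g <-> forall v, annR Y (g v).

Lemma ann_coefwise_principal_coef Z Y E : ann_coefwise Z Y ->
  idempotent_in gps gmul E -> annA Z = principal_right gps gmul E ->
  idempotent_in [set: R] *%R (E one) /\ annR Y = principal_right [set: R] *%R (E one).
Proof.
move=> ZY [gE EE] annZ; have Ec := gps_idempotent_const gE EE.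
split; first split=> //.
  by move: (congr1 (fun F => F one) EE); rewrite Ec gps_const_mul /gps_const eqxx.
apply/seteqP; split=> y.
- move=> Yy; have : annA Z (gps_const y).
    apply/(ZY _ (gps_const_closed y)) => v; rewrite /gps_const.
    by case: ifP => _ //; split=> // x _; rewrite mulr0.
  rewrite annZ => -[a [ga Ea]]; exists (a one); split=> //.
  by move: (congr1 (fun F => F one) Ea); rewrite Ec gps_mul_constl /gps_const eqxx.
- move=> [r [_ ->]]; have : annA Z (gps_const (E one * r)).
    rewrite annZ; exists (gps_const r); split; first exact: gps_const_closed.
    by rewrite [in RHS]Ec gps_const_mul.
  by move/(ZY _ (gps_const_closed _))/(_ one); rewrite /gps_const eqxx.
Qed.

Lemma ann_coefwise_principal_gps Z Y e : ann_coefwise Z Y ->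
  idempotent_in [set: R] *%R e -> annR Y = principal_right [set: R] *%R e ->
  idempotent_in gps gmul (gps_const e) /\
  annA Z = principal_right gps gmul (gps_const e).
Proof.
move=> ZY [_ ee] annY; split.
  by split; [exact: gps_const_closed|rewrite gps_const_mul ee].
apply/seteqP; split=> g.
- move=> Zg; have gg : gps g by case: Zg.
  exists g; split=> //; rewrite gps_mul_constl; apply: funext => v.
  by have := (ZY _ gg).1 Zg v; rewrite annY => -[r [_ ->]]; rewrite mulrA ee.
- move=> [a [ga ->]]; have gea := gps_mul_closed (gps_const_closed e) ga.
  by apply/(ZY _ gea) => v; rewrite annY gps_mul_constl; exists (a v).
Qed.

Lemma ann_coefwise_const P : ann_coefwise (gps_const @` P) P.
Proof.
move=> g gg; split=> [[_ Pg] v|Pg].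
  split=> // z Pz; move: (congr1 (fun F => F v) (Pg _ (imageP _ Pz))).
  by rewrite gps_mul_constl.
split=> // _ [z Pz <-]; rewrite gps_mul_constl; apply: funext => v.
exact: (Pg v).2.
Qed.

Definition coefs (X : set (S -> R)) : set R := [set f u | f in X & u in [set: S]].

Lemma set_pow_gps X n : X `<=` gps -> set_pow gmul X n `<=` gps.
Proof.
move=> XA; elim: n => [|[|n] IH] //; rewrite set_powS => _ [f [F [Xf [PF ->]]]].
exact: gps_mul_closed (XA _ Xf) (IH _ PF).
Qed.

Lemma pow_coefs_annihilate X n F w u y : X `<=` gps -> set_pow gmul X n.+1 F ->
  (forall z, set_pow *%R (coefs X) n.+1 z -> u * z * y = 0) -> u * F w * y = 0.
Proof.
move=> XA; elim: n => [|n IH] in F w u *.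
  by move=> XF Cy; apply: Cy; exists F => //; exists w.
rewrite set_powS => -[f [F' [Xf [PF' ->]]]] Cy.
have /gps_pwo pwof := XA _ Xf; have /gps_pwo pwoF' := set_pow_gps XA PF'.
have finF := pwo_finite_factorizations w HS pwof pwoF'.
rewrite gps_mul_suppE fsbig_distrr // mulr_fsuml_finite //.
apply: fsbig1 => p _ /=.
rewrite mulrA; apply: IH PF' _ => z Pz; rewrite -(mulrA u); apply: Cy.
by exists (f p.1), z; split=> //; exists f => //; exists p.1.
Qed.

(* The constant [c] is carried along so that the Armendariz property can be
   applied to one factor at a time. *)
Lemma armendariz_pow X n c g : X `<=` gps -> gps g ->
  (forall F, set_pow gmul X n.+1 F -> gmul (gmul (gps_const c) F) g = gps_zero) ->
  forall z v, set_pow *%R (coefs X) n.+1 z -> c * z * g v = 0.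
Proof.
move=> XA gg; elim: n c => [|n IH] c cFg z v.
  move=> [f Xf [u _ <-]]; have gcf := gps_mul_closed (gps_const_closed c) (XA _ Xf).
  by have := S_Arm gcf gg (cFg _ Xf) u v; rewrite gps_mul_constl.
rewrite set_powS => -[_ [z' [[f Xf [u _ <-]] [Pz' ->]]]]; rewrite mulrA.
apply: IH Pz' => F PF; have gF := set_pow_gps XA PF.
have gcf := gps_mul_closed (gps_const_closed c) (XA _ Xf).
have cfFg : gmul (gmul (gps_const c) f) (gmul F g) = gps_zero.
  rewrite -(gps_mulA gcf gF gg) (gps_mulA (gps_const_closed c) (XA _ Xf) gF).
  by apply: cFg; exists f, F.
rewrite (gps_mulA (gps_const_closed _) gF gg) gps_mul_constl; apply: funext => w.
by have := S_Arm gcf (gps_mul_closed gF gg) cfFg u w; rewrite gps_mul_constl.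
Qed.

Lemma ann_pow_coefs X n : X `<=` gps ->
  ann_coefwise (set_pow gmul X n.+1) (set_pow *%R (coefs X) n.+1).
Proof.
move=> XA g gg; split=> [[_ Fg0] v|Cg].
  split=> // z Pz; rewrite -[z]mul1r; apply: armendariz_pow XA gg _ _ _ Pz => F PF.
  have -> : gmul (gps_const 1) F = F.
    by rewrite gps_mul_constl; apply: funext => s; rewrite mul1r.
  exact: Fg0.
split=> // F PF; apply: funext => w; apply: fsbig1 => p _.
rewrite -[F p.1]mul1r; apply: pow_coefs_annihilate XA PF _ => z Pz.
by rewrite mul1r; apply: (Cg p.2).2.
Qed.

Definition gps_over (I : set R) := [set f | gps f /\ forall s, I (f s)].

Lemma right_ideal_gps_over I : right_ideal [set: R] +%R *%R (fun x => - x) 0 I ->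
  right_ideal gps gps_add gmul gps_opp gps_zero (gps_over I).
Proof.
move=> idealI; have [_ I0 ID IN IM] := idealI; split.
- by move=> f [].
- by split; [exact: gps_zero_closed|].
- by move=> f g [gf If] [gg Ig]; split; [exact: gps_add_closed|move=> s; apply: ID].
- by move=> f [gf If]; split; [exact: gps_opp_closed|move=> s; apply: IN].
- move=> f a [gf If] ga; split; first exact: gps_mul_closed.
  by move=> s; apply: right_ideal_fsum => // p _; apply: IM.
Qed.

Lemma coefs_gps_over I : I 0 -> coefs (gps_over I) = I.
Proof.
move=> I0; apply/seteqP; split=> [_ [f [_ If] [u _ <-]] //|c Ic].
exists (gps_const c); last by exists one => //; rewrite /gps_const eqxx.
by split=> [|s]; [exact: gps_const_closed|rewrite /gps_const; case: ifP].
Qed.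

Lemma gps_gen_right_BaerP : gps_gen_right_Baer mul le R <-> gen_right_Baer R.
Proof.
split=> [BaerA X _ [x Xx]|BaerR X XA [f Xf]].
  have constXA : gps_const @` X `<=` gps by move=> _ [c _ <-]; exact: gps_const_closed.
  have constX0 : gps_const @` X !=set0 by exists (gps_const x); exists x.
  have [[|n] [E [// _ [idE annE]]]] := BaerA _ constXA constX0.
  rewrite (set_pow_image _ _ (fun a b => esym (gps_const_mul a b))) in annE.
  have [ide anne] := ann_coefwise_principal_coef (ann_coefwise_const _) idE annE.
  by exists n.+1, (E one).
have coefsX0 : coefs X !=set0 by exists (f one); exists f => //; exists one.
have [[|n] [e [// _ [ide anne]]]] := BaerR (coefs X) (@subsetT _ _) coefsX0.
have [idE annE] := ann_coefwise_principal_gps (ann_pow_coefs n XA) ide anne.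
by exists n.+1, (gps_const e).
Qed.

Lemma gps_gen_right_quasi_BaerP :
  gps_gen_right_quasi_Baer mul le R <-> gen_right_quasi_Baer R.
Proof.
split=> [qBaerA I idealI|qBaerR J idealJ].
  have [[|n] [E [// _ [idE annE]]]] := qBaerA _ (right_ideal_gps_over idealI).
  have := ann_pow_coefs n (fun f (Jf : gps_over I f) => Jf.1).
  rewrite coefs_gps_over => [JI|]; last by case: idealI.
  have [ide anne] := ann_coefwise_principal_coef JI idE annE.
  by exists n.+1, (E one).
have [JA _ _ JN JM] := idealJ.
have coefsN c : coefs J c -> coefs J (- c).
  by move=> [f Jf [u _ <-]]; exists (gps_opp f); [apply: JN|exists u].
have coefsM c a : coefs J c -> coefs J (c * a).
  move=> [f Jf [u _ <-]]; exists (gmul f (gps_const a)).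
    exact: JM Jf (gps_const_closed a).
  by exists u => //; rewrite gps_mul_constr.
have [[|n] [e [// _ [ide anne]]]] := qBaerR _ (right_ideal_finite_sums coefsN coefsM).
rewrite r_ann_pow_finite_sums in anne.
have [idE annE] := ann_coefwise_principal_gps (ann_pow_coefs n JA) ide anne.
by exists n.+1, (gps_const e).
Qed.

End GeneralizedPowerSeries.

Theorem corollary3p8 (R : pzRingType) (S : choiceType)
  (mul : S -> S -> S) (one : S) (le : S -> S -> Prop) :
  strictly_ordered_monoid mul one le ->
  quasitotally_ordered mul one le ->
  S_Armendariz mul le R ->
  (gps_gen_right_Baer mul le R <-> gen_right_Baer R) /\
  (gps_gen_right_quasi_Baer mul le R <-> gen_right_quasi_Baer R).
Proof.
move=> HS _ S_Arm.
by split; [exact: gps_gen_right_BaerP HS S_Arm|exact: gps_gen_right_quasi_BaerP HS S_Arm].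
Qed.
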